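(* Fix $\beta\in[0,1)$. For each $n$, let $l=l_n$ be an integer with $\liminf_{n\to\infty} l_n/n>\beta$, let $G_0$ be an $n\times l$ binary matrix whose entries are i.i.d. uniform on $\{0,1\}$, and let $G_1$ be any $n\times k$ binary matrix and $\mathbf m\in\{0,1\}^k$ any message. Consider the defect model and linear-equation encoding described in the context. Then the probability of encoding failure $P(E=0)$ (over the random choice of $G_0$ and the random defect pattern) tends to $0$ as $n\to\infty$. In particular, rates $k/n=1-l/n$ arbitrarily close to $C_{\mathrm{BDC}}=1-\beta$ are achievable on the binary defect channel using encoding by solving the linear equation $G_0^{\mathcal U}\mathbf d=\mathbf b^{\mathcal U}$.
   Context: All arithmetic is over $\mathrm{GF}(2)$. Defect model: each of the $n$ memory cells is independently defective with probability $\beta$; a defective cell is stuck at $0$ or at $1$, each with probability $1/2$, independently. Let $\mathcal U\subseteq\{1,\dots,n\}$ be the set of defect positions, $U=|\mathcal U|$, and $\mathbf s^{\mathcal U}\in\{0,1\}^{U}$ the vector of stuck-at values. For a matrix $M$ (resp. vector $\mathbf v$) with rows indexed by $\{1,\dots,n\}$, $M^{\mathcal U}$ (resp. $\mathbf v^{\mathcal U}$) denotes the submatrix (resp. subvector) of rows indexed by $\mathcal U$. Encoding: set $\mathbf b=G_1\mathbf m+\mathbf s$ on $\mathcal U$, i.e. $\mathbf b^{\mathcal U}=(G_1\mathbf m)^{\mathcal U}+\mathbf s^{\mathcal U}$, and look for $\mathbf d\in\{0,1\}^l$ with $G_0^{\mathcal U}\mathbf d=\mathbf b^{\mathcal U}$;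 then the codeword $\mathbf c=G_1\mathbf m+G_0\mathbf d$ agrees with the stuck-at value at every defect position. $E=1$ (encoding success) if such $\mathbf d$ exists, and $E=0$ (encoding failure) otherwise. *)

From HB Require Import structures.
From mathcomp Require Import all_boot all_order all_algebra.
Set Implicit Arguments. Unset Strict Implicit. Unset Printing Implicit Defensive.
Import Order.TTheory GRing.Theory Num.Theory.
Local Open Scope ring_scope.

(* Defect pattern of n cells: D i = None (cell i not defective),
   D i = Some s (cell i defective, stuck at value s). *)
Definition defect_pattern (n : nat) := {ffun 'I_n -> option bool}.

Definition cell_prob (R : fieldType) (beta : R) (o : option bool) : R :=
  if o is Some _ then beta / 2 else 1 - beta.

Definition defect_prob (R : fieldType) (beta : R) n (D : defect_pattern n) : R :=
  \prod_(i < n) cell_prob beta (D i).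

(* E = 1: there is d in {0,1}^l with G0^U d = b^U, where
   b^U = (G1 m)^U + s^U (over GF(2)). *)
Definition encodable n l k (G0 : 'M['F_2]_(n, l)) (G1 : 'M['F_2]_(n, k))
  (m : 'cV['F_2]_k) (D : defect_pattern n) : bool :=
  [exists d : 'cV['F_2]_l,
    [forall i : 'I_n,
      if D i is Some s then (G0 *m d) i 0 == (G1 *m m) i 0 + (s%:R : 'F_2)
      else true]].

Definition P_fail (R : fieldType) (beta : R) n l k (G1 : 'M['F_2]_(n, k))
  (m : 'cV['F_2]_k) : R :=
  \sum_(G0 : 'M['F_2]_(n, l)) \sum_(D : defect_pattern n)
     ((2 ^+ (n * l))^-1 * defect_prob beta D *
        (~~ encodable G0 G1 m D)%:R).

From HB Require Import structures.
From mathcomp Require Import all_boot all_order all_algebra.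
From mathcomp Require Import ring lra.
Set Implicit Arguments. Unset Strict Implicit. Unset Printing Implicit Defensive.
Import Order.TTheory GRing.Theory Num.Theory.
Local Open Scope ring_scope.

(* If G0^U d = b^U has no solution, some nonzero y supported on the defect
   set U satisfies G0^T y = 0.  For a fixed nonzero y this happens for a
   fraction 2^-l of the matrices G0, so by the union bound over the 2^|U|
   candidates the failure probability given U is at most
   min (1, 2^(|U| - l)) <= t^|U| / t^l for every 1 <= t <= 2.  Averaging over
   the defect pattern gives P(E = 0) <= (1 - beta + beta t)^n / t^l.  For
   t = 1 + x with x small, 1 - beta + beta t < t^(beta + delta); this is made
   precise with a rational p/q between beta + 1/q and beta + delta, and then the
   bound decays geometrically once l >= (beta + delta) n. *)

Section MaskedSystem.
Variables (F : fieldType) (n l : nat) (U : {set 'I_n}).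

Let P : 'M[F]_n := diag_mx (\row_i (i \in U)%:R).

Let mulP_coef (v : 'cV[F]_n) i : (P *m v) i 0 = (i \in U)%:R * v i 0.
Proof. by rewrite mul_diag_mx !mxE. Qed.

Lemma masked_system_unsolvable (A : 'M[F]_(n, l)) (b : 'cV[F]_n) :
  ~ (exists d : 'cV_l, forall i, i \in U -> (A *m d) i 0 = b i 0) ->
  exists y : 'cV[F]_n, [/\ y != 0, forall i, i \notin U -> y i 0 = 0 & A^T *m y = 0].
Proof.
move=> unsolvable.
have trP : P^T = P by rewrite tr_diag_mx.
have [/submxP[X defP] | ] := boolP (P <= (P *m A)^T)%MS.
  case: unsolvable; exists (X^T *m b) => i iU.
  have PAX : P *m A *m X^T = P by rewrite -[RHS]trP {2}defP trmx_mul trmxK.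
  have /matrixP/(_ i 0) := congr1 (mulmx^~ b) PAX.
  by rewrite -!mulmxA !mulP_coef iU !mul1r.
rewrite submxE; set C := cokermx _ => /matrix0Pn[i [j PCij]].
exists (P *m col j C); split.
  apply: contraNneq PCij => /matrixP/(_ i 0).
  by rewrite colE mulmxA -colE [X in X = _]mxE [RHS]mxE => ->.
- by move=> i' i'U; rewrite mulP_coef (negbTE i'U) mul0r.
- by rewrite colE mulmxA -{1}trP -trmx_mul mulmxA mulmx_coker mul0mx.
Qed.

End MaskedSystem.

Section KernelCount.
Variables (F : finFieldType) (n l : nat).

Lemma card_trmx_mul_fiber (y : 'cV[F]_n) (w : 'cV[F]_l) : y != 0 ->
  #|[set G : 'M[F]_(n, l) | G^T *m y == w]| = #|[set G : 'M[F]_(n, l) | G^T *m y == 0]|.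
Proof.
move=> /matrix0Pn[i0 [j0 yi0]]; rewrite ord1 in yi0.
pose S := (y i0 0)^-1 *: (delta_mx i0 0 *m w^T).
have ST : S^T *m y = w.
  rewrite linearZ /= trmx_mul trmxK trmx_delta -scalemxAl -mulmxA -rowE.
  by rewrite [row _ _]mx11_scalar mxE mul_mx_scalar scalerA mulVf // scale1r.
rewrite -(card_imset _ (addIr (- S))) (can2_imset_pre _ (subrK S) (addrK S)).
by apply: eq_card => G; rewrite !inE linearD mulmxDl ST -subr_eq0 addrK.
Qed.

Lemma card_trmx_mul_kernel (y : 'cV[F]_n) : y != 0 ->
  (#|[set G : 'M[F]_(n, l) | G^T *m y == 0%R]| * #|F| ^ l)%N = (#|F| ^ (n * l))%N.
Proof.
move=> y_neq0.
have card_cV : #|{: 'cV[F]_l}| = (#|F| ^ l)%N by rewrite card_mx muln1.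
rewrite -card_cV -card_mx.
transitivity (\sum_(w : 'cV[F]_l) #|[set G : 'M[F]_(n, l) | G^T *m y == w]|).
  by rewrite (eq_bigr _ (fun w _ => card_trmx_mul_fiber w y_neq0)) sum_nat_const mulnC.
rewrite -sum1_card (partition_big (fun G : 'M[F]_(n, l) => G^T *m y) xpredT) //=.
by apply: eq_bigr => w _; rewrite -sum1_card; apply: eq_bigl => G; rewrite inE.
Qed.

End KernelCount.

Lemma card_cV_supported (V : finNmodType) n (U : {set 'I_n}) :
  #|[set y : 'cV[V]_n | [forall i in ~: U, y i 0 == 0]]| = (#|V| ^ #|U|)%N.
Proof.
have col_inj : injective (fun f : {ffun 'I_n -> V} => \col_i f i).
  by move=> f g /matrixP fg; apply/ffunP => i; have := fg i 0; rewrite !mxE.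
rewrite -cardsT -(card_pffun_on 0 U [set: V]) -(card_imset _ col_inj).
apply: eq_card => y; rewrite inE; apply/forall_inP/imsetP => [y0 | [f /pffun_onP[supp_f _] ->] i].
  exists [ffun i => y i 0].
    apply/pffun_onP; split=> [|x _]; last by rewrite inE.
    by apply/subsetP=> i; rewrite !inE ffunE; apply: contraR => iU; rewrite y0 ?inE.
  by apply/matrixP => i j; rewrite ord1 !mxE ffunE.
rewrite inE mxE => iU; apply: contraR iU => fi.
by apply: (subsetP supp_f); rewrite inE.
Qed.

Definition defects {n} (D : defect_pattern n) : {set 'I_n} := [set i | D i != None].

Lemma unencodable_kernel_vector n l k (G0 : 'M['F_2]_(n, l)) (G1 : 'M['F_2]_(n, k)) m D :
  ~~ encodable G0 G1 m D ->
  exists y : 'cV['F_2]_n, [/\ y != 0, forall i, i \notin defects D -> y i 0 = 0 & G0^T *m y = 0].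
Proof.
move=> /existsPn unencodable.
pose b : 'cV['F_2]_n := \col_i ((G1 *m m) i 0 + if D i is Some s then s%:R else 0).
apply: (masked_system_unsolvable (b := b)) => -[d solves_d].
have /forallPn[i] := unencodable d; case Di: (D i) => [s|] //.
by rewrite solves_d ?inE ?Di // mxE Di eqxx.
Qed.

Lemma card_unencodable n l k (G1 : 'M['F_2]_(n, k)) m (D : defect_pattern n) :
  (#|[set G0 : 'M_(n, l) | ~~ encodable G0 G1 m D]| * 2 ^ l
    <= 2 ^ #|defects D| * 2 ^ (n * l))%N.
Proof.
set A := [set G0 | _].
set V := [set y : 'cV['F_2]_n | [forall i in ~: defects D, y i 0 == 0]] :\ 0%R.
have card_F2 : #|'F_2| = 2%N by rewrite card_Fp.
have union_bound : (#|A| <= \sum_(y in V) #|[set G : 'M_(n, l) | G^T *m y == 0%R]|)%N.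
  rewrite -sum1_card; apply: (@leq_trans (\sum_(G in A) \sum_(y in V) (G^T *m y == 0%R))%N).
    apply: leq_sum => G; rewrite inE => /unencodable_kernel_vector[y [y_neq0 supp_y Gy]].
    rewrite (bigD1 y) ?Gy ?eqxx //= !inE y_neq0.
    by apply/forall_inP => i; rewrite inE => /supp_y ->.
  rewrite exchange_big /=; apply: leq_sum => y _.
  rewrite -sum1_card big_mkcond [X in (_ <= X)%N]big_mkcond /=.
  by apply: leq_sum => G _; rewrite !inE; case: (~~ _); case: (_ == _).
apply: (leq_trans (leq_mul union_bound (leqnn _))).
rewrite big_distrl /= (eq_bigr (fun _ => 2 ^ (n * l)))%N => [|y]; last first.
  by rewrite !inE => /andP[y_neq0 _]; have := card_trmx_mul_kernel l y_neq0; rewrite card_F2.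
rewrite sum_nat_const leq_mul2r; have := card_cV_supported 'F_2 (defects D); rewrite card_F2 => <-.
by rewrite subset_leq_card ?orbT ?subD1set.
Qed.

Lemma P_failE (R : fieldType) (beta : R) n l k (G1 : 'M['F_2]_(n, k)) m :
  P_fail beta l G1 m = \sum_(D : defect_pattern n)
    defect_prob beta D * (#|[set G0 : 'M_(n, l) | ~~ encodable G0 G1 m D]|%:R / 2 ^+ (n * l)).
Proof.
rewrite /P_fail exchange_big /=; apply: eq_bigr => D _.
rewrite -mulr_sumr mulrAC mulrC; congr (_ * _); rewrite mulrC; congr (_ * _).
rewrite -sum1_card natr_sum [RHS]big_mkcond /=.
by apply: eq_bigr => G0 _; rewrite inE; case: (~~ _).
Qed.

Lemma ler_expr_ratio (R : realFieldType) (c t : R) (u l : nat) :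
  1 <= t -> t <= 2 -> 0 <= c -> c <= 1 -> c * 2 ^+ l <= 2 ^+ u -> c <= t ^+ u / t ^+ l.
Proof.
move=> t_ge1 t_le2 c_ge0 c_le1 c2l.
have t_gt0 : 0 < t by rewrite (lt_le_trans ltr01).
have [le_lu | /ltnW/subnKC def_l] := leqP l u.
  by apply: (le_trans c_le1); rewrite ler_pdivlMr ?exprn_gt0 // mul1r ler_weXn2l.
rewrite -def_l exprD mulrCA ger_pMr ?exprn_gt0 // in c2l.
rewrite -{}def_l exprD invfM mulrA mulfV ?expf_neq0 ?gt_eqF // mul1r.
rewrite -[_^-1]mul1r ler_pdivlMr ?exprn_gt0 //; apply: le_trans c2l.
by rewrite ler_wpM2l // lerXn2r ?nnegrE // ltW.
Qed.

Lemma sum_defect_prob_expr (R : numFieldType) (beta t : R) n :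
  \sum_(D : defect_pattern n) defect_prob beta D * t ^+ #|defects D|
  = (1 - beta + beta * t) ^+ n.
Proof.
pose F (o : option bool) := cell_prob beta o * (if o != None then t else 1).
have -> : \sum_(D : defect_pattern n) defect_prob beta D * t ^+ #|defects D|
    = \sum_(D : defect_pattern n) \prod_i F (D i).
  apply: eq_bigr => D _.
  by rewrite big_split /= -big_mkcond prodr_const cardsE.
rewrite -(bigA_distr_bigA (fun _ => F)) prodr_const card_ord; congr (_ ^+ _).
rewrite (bigD1 None) // (bigD1 (Some true)) // (bigD1 (Some false)) //= big_pred0; last by case=> [[]|].
by rewrite /F /= mulr1 addr0 -mulrDl -splitr.
Qed.

Lemma P_fail_le (R : realFieldType) (beta t : R) n l k (G1 : 'M['F_2]_(n, k)) m :
  0 <= beta -> beta <= 1 -> 1 <= t -> t <= 2 ->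
  P_fail beta l G1 m <= (1 - beta + beta * t) ^+ n / t ^+ l.
Proof.
move=> beta_ge0 beta_le1 t_ge1 t_le2.
rewrite P_failE -sum_defect_prob_expr mulr_suml; apply: ler_sum => D _.
rewrite -mulrA; apply: ler_wpM2l.
  by apply: prodr_ge0 => i _; case: (D i) => [s|] /=; rewrite ?divr_ge0 ?subr_ge0.
set A := [set G0 | _].
have pow2_gt0 e : 0 < 2 ^+ e :> R by rewrite exprn_gt0.
apply: ler_expr_ratio => //; first by rewrite divr_ge0 ?ler0n ?ltW.
  rewrite ler_pdivrMr // mul1r -natrX ler_nat.
  by rewrite (leq_trans (max_card A)) // card_mx card_Fp.
rewrite mulrAC ler_pdivrMr // -!natrX -!natrM ler_nat.
exact: card_unencodable.
Qed.

Lemma bernoulli_ineq (R : realDomainType) (y : R) (k : nat) :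
  -1 <= y -> 1 + k%:R * y <= (1 + y) ^+ k.
Proof.
move=> y_ge_1; elim: k => [|k IHk]; first by rewrite mul0r addr0 expr0.
have y1_ge0 : 0 <= 1 + y by lra.
rewrite exprS -natr1 (le_trans _ (ler_wpM2l y1_ge0 IHk)) //.
have : 0 <= k%:R * y ^+ 2 by rewrite mulr_ge0 ?ler0n ?sqr_ge0.
nra.
Qed.

Lemma perturbed_expr_lt (R : realFieldType) (beta x : R) (p q : nat) :
  0 <= beta -> beta <= 1 -> 0 < x -> (0 < q)%N ->
  p%:R * q%:R * x <= 1 -> beta * q%:R + 1 < p%:R ->
  (1 + beta * x) ^+ q < (1 + x) ^+ p.
Proof.
move=> beta_ge0 beta_le1 x_gt0 q_gt0 pqx_le1 p_big.
have q_ge1 : 1 <= q%:R :> R by rewrite ler1n.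
have bx_ge0 : 0 <= beta * x := mulr_ge0 beta_ge0 (ltW x_gt0).
have px_le1 : p%:R * x <= 1 by nra.
have bx_le1 : beta * x <= 1 by nra.
have qbx_lt1 : q%:R * (beta * x) < 1 by nra.
have lower_t : 1 + p%:R * x <= (1 + x) ^+ p by apply: bernoulli_ineq; lra.
have upper_A : (1 + beta * x) ^+ q * (1 - q%:R * (beta * x)) <= 1.
  have bern : 1 - q%:R * (beta * x) <= (1 - beta * x) ^+ q.
    by rewrite -mulrN; apply: bernoulli_ineq; lra.
  apply: le_trans (ler_wpM2l (exprn_ge0 q (addr_ge0 ler01 bx_ge0)) bern) _.
  by rewrite -exprMn exprn_ile1 //; nra.
have qbx_gt0 : 0 < 1 - q%:R * (beta * x) by lra.
rewrite -(ltr_pM2r qbx_gt0); apply: le_lt_trans upper_A _.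
apply: lt_le_trans (ler_wpM2r (ltW qbx_gt0) lower_t).
have : beta * (p%:R * q%:R * x) <= 1 by nra.
nra.
Qed.

Lemma exists_expr_gt (R : archiRealFieldType) (s M : R) :
  1 < s -> exists a0 : nat, forall a, (a0 <= a)%N -> M < s ^+ a.
Proof.
move=> s_gt1; have h_gt0 : 0 < s - 1 by rewrite subr_gt0.
exists (Num.truncn (M / (s - 1))).+1 => a a0_le_a.
have := truncnS_gt (M / (s - 1)); rewrite ltr_pdivrMr // => M_lt.
have bern : 1 + a%:R * (s - 1) <= s ^+ a.
  by have := @bernoulli_ineq _ (s - 1) a; rewrite (addrC 1 (s - 1)) subrK; apply; lra.
have : (Num.truncn (M / (s - 1))).+1%:R <= a%:R :> R by rewrite ler_nat.
nra.
Qed.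

Lemma expr_ratio_vanish (R : archiRealFieldType) (A t : R) (p q : nat) :
  1 <= A -> 1 <= t -> (0 < q)%N -> A ^+ q < t ^+ p ->
  forall eps, 0 < eps -> exists N, forall n l,
    (N <= n)%N -> (p * (n %/ q) <= l)%N -> A ^+ n / t ^+ l < eps.
Proof.
move=> A_ge1 t_ge1 q_gt0 Aq_lt eps eps_gt0.
have pos_pow (x : R) e : 1 <= x -> 0 < x ^+ e by move=> /(lt_le_trans ltr01)/exprn_gt0.
set C := A ^+ q; have C_gt0 : 0 < C := pos_pow A q A_ge1.
have [a0 a0P] : exists a0, forall a, (a0 <= a)%N -> C / eps < (t ^+ p / C) ^+ a.
  by apply: exists_expr_gt; rewrite ltr_pdivlMr // mul1r.
exists (q * a0)%N => n l a0q_le_n pa_le_l; set a := (n %/ q)%N.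
have a0_le_a : (a0 <= a)%N by rewrite leq_divRL // mulnC.
have n_le : (n <= q * a.+1)%N by rewrite mulnC ltnW // ltn_ceil.
rewrite ltr_pdivrMr ?pos_pow //.
apply: (le_lt_trans (y := C * C ^+ a)).
  by rewrite -exprS /C -exprM; exact: ler_weXn2l A_ge1 _ _ n_le.
apply: (lt_le_trans (y := eps * t ^+ (p * a))); last first.
  by rewrite ler_pM2l //; exact: ler_weXn2l t_ge1 _ _ pa_le_l.
have scale : (t ^+ p / C) ^+ a * C ^+ a = t ^+ (p * a).
  by rewrite -exprMn divfK ?gt_eqF // -exprM.
rewrite -scale mulrA (ltr_pM2r (exprn_gt0 a C_gt0)) mulrC -ltr_pdivrMr //.
exact: a0P.
Qed.

Lemma exists_ratio_between (R : archiRealFieldType) (beta delta : R) :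
  0 <= beta -> 0 < delta -> exists p q : nat,
    [/\ (0 < q)%N, beta * q%:R + 1 < p%:R & p%:R <= (beta + delta) * q%:R].
Proof.
move=> beta_ge0 delta_gt0.
set q := (Num.truncn (2 / delta)).+1.
have q_big : 2 < q%:R * delta by rewrite -ltr_pdivrMr //; apply: truncnS_gt.
have bdq_ge0 : 0 <= (beta + delta) * q%:R by rewrite mulr_ge0 ?ler0n //; lra.
exists (Num.truncn ((beta + delta) * q%:R)), q; split => //.
  have := truncnS_gt ((beta + delta) * q%:R); rewrite -natr1; lra.
by rewrite truncn_le.
Qed.

Lemma exists_vanishing_expr_ratio (R : archiRealFieldType) (beta delta : R) :
  0 <= beta -> beta <= 1 -> 0 < delta ->
  exists t : R, [/\ 1 <= t, t <= 2 & forall eps, 0 < eps -> exists N, forall n l,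
    (N <= n)%N -> (beta + delta) * n%:R <= l%:R ->
    (1 - beta + beta * t) ^+ n / t ^+ l < eps].
Proof.
move=> beta_ge0 beta_le1 delta_gt0.
have [p [q [q_gt0 p_big p_le]]] := exists_ratio_between beta_ge0 delta_gt0.
have pq1_gt0 : 0 < p%:R * q%:R + 1 :> R by rewrite ltr_wpDl ?mulr_ge0 ?ler0n.
pose x := (p%:R * q%:R + 1 : R)^-1.
have x_gt0 : 0 < x by rewrite invr_gt0.
have pqx_lt1 : p%:R * q%:R * x < 1.
  by rewrite ltr_pdivrMr // mul1r ltrDl.
have x_le1 : x <= 1 by rewrite invf_le1 // lerDr mulr_ge0 ?ler0n.
exists (1 + x); split; [lra | lra | move=> eps eps_gt0].
have Aq_lt := perturbed_expr_lt beta_ge0 beta_le1 x_gt0 q_gt0 (ltW pqx_lt1) p_big.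
have bx_ge0 := mulr_ge0 beta_ge0 (ltW x_gt0).
have [||N NP] := expr_ratio_vanish _ _ q_gt0 Aq_lt eps_gt0; [lra | lra |].
exists N => n l N_le_n bdn_le_l.
rewrite (_ : 1 - beta + beta * (1 + x) = 1 + beta * x); last by ring.
apply: NP => //; rewrite -(ler_nat R) natrM; apply: le_trans bdn_le_l.
rewrite (le_trans (ler_wpM2r (ler0n _ _) p_le)) // -mulrA; apply: ler_wpM2l; first lra.
by rewrite -natrM ler_nat mulnC leq_divM.
Qed.

Unset Implicit Arguments.

Theorem proposition3 (R : archiRealFieldType) (beta : R) :
  0 <= beta -> beta < 1 ->
  forall (l : nat -> nat),
  (* liminf_{n -> oo} l n / n > beta *)
  (exists2 delta : R, 0 < delta &
     exists N0 : nat, forall n : nat, (N0 <= n)%N ->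
       (beta + delta) * n%:R <= (l n)%:R) ->
  forall (k : nat -> nat) (G1 : forall n : nat, 'M['F_2]_(n, k n))
         (m : forall n : nat, 'cV['F_2]_(k n)),
  forall eps : R, 0 < eps ->
    exists N : nat, forall n : nat, (N <= n)%N ->
      P_fail beta (l n) (G1 n) (m n) < eps.
Proof.
move=> beta_ge0 beta_lt1 l [delta delta_gt0 [N0 l_large]] k G1 m eps eps_gt0.
have [t [t_ge1 t_le2 vanish]] := exists_vanishing_expr_ratio beta_ge0 (ltW beta_lt1) delta_gt0.
have [N NP] := vanish eps eps_gt0.
exists (maxn N0 N) => n; rewrite geq_max => /andP[N0_le_n N_le_n].
apply: le_lt_trans (NP _ _ N_le_n (l_large _ N0_le_n)).
exact: P_fail_le beta_ge0 (ltW beta_lt1) t_ge1 t_le2.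
Qed.
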